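(* Let $\gamma\ge1$, $n\in\mathbb{N}^*$, $\lambda_n=\lambda_{n,\gamma}$ and $x_n=\big(\lambda_n/(n\pi)^2\big)^{1/(2\gamma)}$, and assume $x_n<1$. Define $$\mu_n=\min\Big\{\frac{n\pi}{\gamma+1},\ \frac{\gamma}{\gamma+1}\Big(\frac{(n\pi)^2}{\lambda_n}\Big)^{\frac12+\frac1{2\gamma}}\Big\},\qquad C_n=\frac{2\lambda_ne^{\mu_nx_n^{\gamma+1}}}{(\gamma+1)\mu_nx_n^{\gamma-\frac12}},\qquad W_n(x)=C_ne^{-\mu_nx^{\gamma+1}}.$$ Then $W_n$ satisfies $-W_n''(x)+[(n\pi)^2x^{2\gamma}-\lambda_n]W_n(x)\ge0$ for all $x\in(x_n,1)$, $W_n(1)\ge0$, and $W_n'(x_n)<-\sqrt{x_n}\,\lambda_n$.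
   Context: $\lambda_{n,\gamma}$ is the smallest eigenvalue of the operator $A_{n,\gamma}\varphi=-\varphi''+(n\pi)^2|x|^{2\gamma}\varphi$ with domain $H^2(-1,1)\cap H^1_0(-1,1)$ (in particular $\lambda_n>0$). *)

From Stdlib Require Import Reals Lra.
Open Scope R_scope.

(* a^y for a >= 0 and y > 0, with the convention 0^y = 0
   (Stdlib's Rpower is only meaningful for a > 0). *)
Definition pw (a y : R) : R := if Rlt_dec 0 a then Rpower a y else 0.

Definition potential (g : R) (n : nat) (x : R) : R :=
  (INR n * PI) ^ 2 * pw (Rabs x) (2 * g).

(* lam is an eigenvalue of A_{n,g} phi = -phi'' + (n pi)^2 |x|^(2g) phi on
   (-1,1) with Dirichlet boundary conditions: there is a nonzero phi,
   twice differentiable on (-1,1), with phi -> 0 at both endpoints,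
   solving -phi'' + V phi = lam phi on (-1,1). *)
Definition is_eigenvalue (g : R) (n : nat) (lam : R) : Prop :=
  exists phi phi1 phi2 : R -> R,
    (exists x, -1 < x < 1 /\ phi x <> 0) /\
    (forall x, -1 < x < 1 ->
       derivable_pt_lim phi x (phi1 x) /\
       derivable_pt_lim phi1 x (phi2 x) /\
       - phi2 x + potential g n x * phi x = lam * phi x) /\
    limit1_in phi (fun y => -1 < y < 1) 0 (-1) /\
    limit1_in phi (fun y => -1 < y < 1) 0 1.

Definition is_smallest_eigenvalue (g : R) (n : nat) (lam : R) : Prop :=
  is_eigenvalue g n lam /\ forall mu, is_eigenvalue g n mu -> lam <= mu.

Definition xn (g : R) (n : nat) (lam : R) : R :=
  Rpower (lam / (INR n * PI) ^ 2) (1 / (2 * g)).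

Definition mun (g : R) (n : nat) (lam : R) : R :=
  Rmin (INR n * PI / (g + 1))
       (g / (g + 1) * Rpower ((INR n * PI) ^ 2 / lam) (1 / 2 + 1 / (2 * g))).

Definition Cn (g : R) (n : nat) (lam : R) : R :=
  2 * lam * exp (mun g n lam * Rpower (xn g n lam) (g + 1))
  / ((g + 1) * mun g n lam * Rpower (xn g n lam) (g - 1 / 2)).

Definition Wn (g : R) (n : nat) (lam : R) (x : R) : R :=
  Cn g n lam * exp (- mun g n lam * pw x (g + 1)).

(* Writing N = n pi, k = mu_n (gamma + 1) and E = e^{-mu_n x^(gamma+1)}, a direct computation gives
   -W_n'' + (N^2 x^(2 gamma) - lambda_n) W_n
     = C_n E (k gamma x^(gamma-1) + (N^2 - k^2) x^(2 gamma) - lambda_n).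
   The first choice in the minimum defining mu_n gives k <= N, so the bracket is nondecreasing in x;
   at x = x_n, where N^2 x_n^(2 gamma) = lambda_n, it equals k x_n^(gamma-1) (gamma - k x_n^(gamma+1)),
   which is nonnegative by the second choice.  The constant C_n is tuned so that W_n'(x_n) is exactly
   -2 sqrt(x_n) lambda_n. *)

From Stdlib Require Import Reals Lra Lia Psatz.
Open Scope R_scope.

Lemma Rpower_gt0 (x y : R) : 0 < Rpower x y.
Proof. unfold Rpower; apply exp_pos. Qed.

Lemma derivable_pt_lim_exp_Rpower (m a x : R) : 0 < x ->
  derivable_pt_lim (fun y => exp (- m * Rpower y a)) x
    (- m * a * Rpower x (a - 1) * exp (- m * Rpower x a)).
Proof.
  intros hx.
  replace (- m * a * Rpower x (a - 1) * exp (- m * Rpower x a))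
    with (exp (- m * Rpower x a) * (0 * Rpower x a + - m * (a * Rpower x (a - 1)))) by ring.
  apply (derivable_pt_lim_comp (fun y => - m * Rpower y a) exp); [|apply derivable_pt_lim_exp].
  apply (derivable_pt_lim_mult (fun _ => - m) (fun y => Rpower y a)); [apply derivable_pt_lim_const|].
  now apply derivable_pt_lim_power.
Qed.

Lemma derivable_pt_lim_Rpower_mul_exp_Rpower (m b x : R) : 0 < x ->
  derivable_pt_lim (fun y => Rpower y b * exp (- m * Rpower y (b + 1))) x
    ((b * Rpower x (b - 1) - m * (b + 1) * Rpower x (2 * b)) * exp (- m * Rpower x (b + 1))).
Proof.
  intros hx.
  assert (hsq : Rpower x (2 * b) = Rpower x b * Rpower x (b + 1 - 1)).
  { rewrite <- Rpower_plus; f_equal; ring. }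
  rewrite hsq.
  replace ((b * Rpower x (b - 1) - m * (b + 1) * (Rpower x b * Rpower x (b + 1 - 1)))
             * exp (- m * Rpower x (b + 1)))
    with (b * Rpower x (b - 1) * exp (- m * Rpower x (b + 1))
          + Rpower x b * (- m * (b + 1) * Rpower x (b + 1 - 1) * exp (- m * Rpower x (b + 1))))
    by ring.
  apply (derivable_pt_lim_mult (fun y => Rpower y b) (fun y => exp (- m * Rpower y (b + 1)))).
  - now apply derivable_pt_lim_power.
  - now apply derivable_pt_lim_exp_Rpower.
Qed.

Lemma supersolution_bracket_nonneg (g k N lam x0 x : R) :
  1 <= g -> 0 < x0 <= x -> 0 <= k <= N ->
  k * Rpower x0 (g + 1) <= g -> N ^ 2 * Rpower x0 (2 * g) = lam ->
  0 <= k * g * Rpower x (g - 1) + (N ^ 2 - k ^ 2) * Rpower x (2 * g) - lam.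
Proof.
  intros hg hx [hk hkN] hkx0 hlam.
  assert (hsplit : Rpower x0 (2 * g) = Rpower x0 (g - 1) * Rpower x0 (g + 1)).
  { rewrite <- Rpower_plus; f_equal; ring. }
  assert (hp : Rpower x0 (g - 1) <= Rpower x (g - 1)) by (apply Rle_Rpower_l; lra).
  assert (hq : Rpower x0 (2 * g) <= Rpower x (2 * g)) by (apply Rle_Rpower_l; lra).
  pose proof (Rpower_gt0 x0 (g - 1)) as hp0.
  assert (hkg : k * g * Rpower x0 (g - 1) <= k * g * Rpower x (g - 1))
    by (apply Rmult_le_compat_l; [nra|exact hp]).
  assert (hNk : (N ^ 2 - k ^ 2) * Rpower x0 (2 * g) <= (N ^ 2 - k ^ 2) * Rpower x (2 * g))
    by (apply Rmult_le_compat_l; [nra|exact hq]).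
  assert (hat_x0 : 0 <= k * Rpower x0 (g - 1) * (g - k * Rpower x0 (g + 1)))
    by (apply Rmult_le_pos; [apply Rmult_le_pos|]; lra).
  rewrite hsplit in hlam, hNk. nra.
Qed.

(* Stdlib's [ln] is [0] on nonpositive arguments, so [Rpower] of a nonpositive base is [1]:
   the hypothesis [x_n < 1] alone forces [lambda_n > 0]. *)
Lemma xn_lt_1_lam_pos (g : R) (n : nat) (lam : R) :
  0 < INR n * PI -> xn g n lam < 1 -> 0 < lam.
Proof.
  intros hN hx.
  destruct (Rlt_le_dec 0 lam) as [hlam|hlam]; [exact hlam|].
  assert (hq : lam / (INR n * PI) ^ 2 <= 0).
  { unfold Rdiv. pose proof (Rinv_0_lt_compat _ (pow_lt _ 2 hN)). nra. }
  unfold xn, Rpower, ln in hx.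
  destruct (Rlt_dec 0 (lam / (INR n * PI) ^ 2)); [lra|].
  rewrite Rmult_0_r, exp_0 in hx. lra.
Qed.

Definition dWn (g : R) (n : nat) (lam x : R) : R :=
  - (Cn g n lam * mun g n lam * (g + 1))
    * (Rpower x g * exp (- mun g n lam * Rpower x (g + 1))).

Definition d2Wn (g : R) (n : nat) (lam x : R) : R :=
  - (Cn g n lam * mun g n lam * (g + 1))
    * ((g * Rpower x (g - 1) - mun g n lam * (g + 1) * Rpower x (2 * g))
       * exp (- mun g n lam * Rpower x (g + 1))).

Section Supersolution.

Variables (g : R) (n : nat) (lam : R).
Hypotheses (hg : 1 <= g) (hN : 0 < INR n * PI) (hlam : 0 < lam).

Local Notation N := (INR n * PI).
Local Notation x0 := (xn g n lam).
Local Notation m := (mun g n lam).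
Local Notation C := (Cn g n lam).

Lemma INR_n_neq0 : INR n <> 0.
Proof. pose proof PI_RGT_0. intros h. rewrite h in hN. lra. Qed.

Lemma N2_Rpower_xn : N ^ 2 * Rpower x0 (2 * g) = lam.
Proof.
  unfold xn. rewrite Rpower_mult.
  replace (1 / (2 * g) * (2 * g)) with 1 by (field; lra).
  rewrite Rpower_1; [field; auto using PI_neq0, INR_n_neq0|].
  apply Rdiv_lt_0_compat; [lra|apply pow_lt; lra].
Qed.

Lemma mun_pos : 0 < m.
Proof.
  apply Rmin_glb_lt.
  - apply Rdiv_lt_0_compat; lra.
  - apply Rmult_lt_0_compat; [apply Rdiv_lt_0_compat; lra|apply Rpower_gt0].
Qed.

Lemma mun_mul_le : m * (g + 1) <= N.
Proof.
  assert (h : m <= N / (g + 1)) by apply Rmin_l.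
  apply Rmult_le_compat_r with (r := g + 1) in h; [|lra].
  now replace (N / (g + 1) * (g + 1)) with N in h by (field; lra).
Qed.

Lemma mun_mul_Rpower_xn_le : m * (g + 1) * Rpower x0 (g + 1) <= g.
Proof.
  set (P := Rpower (N ^ 2 / lam) (1 / 2 + 1 / (2 * g))).
  assert (hN2 : 0 < N ^ 2) by (apply pow_lt; exact hN).
  assert (hx0 : Rpower x0 (g + 1) = Rpower (lam / N ^ 2) (1 / 2 + 1 / (2 * g))).
  { unfold xn. rewrite Rpower_mult. f_equal. field. lra. }
  assert (hinv : P * Rpower x0 (g + 1) = 1).
  { rewrite hx0; unfold P.
    rewrite Rpower_mult_distr by (apply Rdiv_lt_0_compat; lra).
    replace (N ^ 2 / lam * (lam / N ^ 2)) with 1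
      by (field; repeat split; auto using PI_neq0, INR_n_neq0; lra).
    unfold Rpower; rewrite ln_1, Rmult_0_r; apply exp_0. }
  assert (hm : m <= g / (g + 1) * P) by apply Rmin_r.
  apply Rmult_le_compat_r with (r := (g + 1) * Rpower x0 (g + 1)) in hm;
    [|pose proof (Rpower_gt0 x0 (g + 1)); nra].
  replace (g / (g + 1) * P * ((g + 1) * Rpower x0 (g + 1)))
    with (g * (P * Rpower x0 (g + 1))) in hm by (field; lra).
  rewrite hinv in hm. lra.
Qed.

Lemma Cn_pos : 0 < C.
Proof.
  pose proof mun_pos.
  apply Rdiv_lt_0_compat.
  - pose proof (exp_pos (m * Rpower x0 (g + 1))). nra.
  - apply Rmult_lt_0_compat; [nra|apply Rpower_gt0].
Qed.

Lemma Wn_Rpower (x : R) : 0 < x -> Wn g n lam x = C * exp (- m * Rpower x (g + 1)).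
Proof. intros hx. unfold Wn, pw. now destruct (Rlt_dec 0 x). Qed.

Lemma derivable_pt_lim_Wn (x : R) : 0 < x -> derivable_pt_lim (Wn g n lam) x (dWn g n lam x).
Proof.
  intros hx.
  apply (derivable_pt_lim_locally_ext (fun y => C * exp (- m * Rpower y (g + 1))) _ x 0 (x + 1));
    [lra| intros y hy; symmetry; apply Wn_Rpower; lra|].
  unfold dWn.
  replace (- (C * m * (g + 1)) * (Rpower x g * exp (- m * Rpower x (g + 1))))
    with (C * (- m * (g + 1) * Rpower x (g + 1 - 1) * exp (- m * Rpower x (g + 1))))
    by (replace (g + 1 - 1) with g by ring; ring).
  apply derivable_pt_lim_scal. now apply derivable_pt_lim_exp_Rpower.
Qed.

Lemma derivable_pt_lim_dWn (x : R) : 0 < x ->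
  derivable_pt_lim (dWn g n lam) x (d2Wn g n lam x).
Proof.
  intros hx. apply derivable_pt_lim_scal.
  now apply derivable_pt_lim_Rpower_mul_exp_Rpower.
Qed.

Lemma Wn_supersolution (x : R) : x0 <= x ->
  0 <= - d2Wn g n lam x + (N ^ 2 * Rpower x (2 * g) - lam) * Wn g n lam x.
Proof.
  intros hx.
  assert (hx0 : 0 < x0) by apply Rpower_gt0.
  unfold d2Wn. rewrite Wn_Rpower by lra.
  set (E := exp (- m * Rpower x (g + 1))).
  replace (- (- (C * m * (g + 1)) * ((g * Rpower x (g - 1) - m * (g + 1) * Rpower x (2 * g)) * E))
           + (N ^ 2 * Rpower x (2 * g) - lam) * (C * E))
    with (C * E * (m * (g + 1) * g * Rpower x (g - 1)
                   + (N ^ 2 - (m * (g + 1)) ^ 2) * Rpower x (2 * g) - lam))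
    by ring.
  apply Rmult_le_pos; [apply Rlt_le, Rmult_lt_0_compat; [apply Cn_pos|apply exp_pos]|].
  pose proof mun_pos.
  apply (supersolution_bracket_nonneg g (m * (g + 1)) N lam x0 x); try lra.
  - split; [nra|apply mun_mul_le].
  - apply mun_mul_Rpower_xn_le.
  - apply N2_Rpower_xn.
Qed.

Lemma Wn_1_pos : 0 < Wn g n lam 1.
Proof. rewrite Wn_Rpower by lra. apply Rmult_lt_0_compat; [apply Cn_pos|apply exp_pos]. Qed.

Lemma dWn_xn : dWn g n lam x0 = - 2 * lam * sqrt x0.
Proof.
  assert (hx0 : 0 < x0) by apply Rpower_gt0.
  pose proof mun_pos. pose proof (Rpower_gt0 x0 (g - 1 / 2)).
  assert (hsqrt : Rpower x0 g = Rpower x0 (g - 1 / 2) * sqrt x0).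
  { rewrite <- Rpower_sqrt, <- Rpower_plus by exact hx0. f_equal; field. }
  unfold dWn, Cn. rewrite hsqrt.
  replace (- m * Rpower x0 (g + 1)) with (- (m * Rpower x0 (g + 1))) by ring.
  rewrite exp_Ropp. field.
  repeat split; try lra. apply Rgt_not_eq, exp_pos.
Qed.

End Supersolution.

Theorem mainTheorem9 (g : R) (n : nat) (lam : R)
  (hg : 1 <= g) (hn : (1 <= n)%nat)
  (hlam : is_smallest_eigenvalue g n lam)
  (hx : xn g n lam < 1) :
  exists W1 : R -> R,
    (forall x, 0 < x -> derivable_pt_lim (Wn g n lam) x (W1 x)) /\
    (forall x, xn g n lam < x < 1 ->
       exists w2, derivable_pt_lim W1 x w2 /\
         - w2 + ((INR n * PI) ^ 2 * Rpower x (2 * g) - lam) * Wn g n lam x >= 0) /\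
    Wn g n lam 1 >= 0 /\
    W1 (xn g n lam) < - sqrt (xn g n lam) * lam.
Proof.
  assert (hN : 0 < INR n * PI)
    by (apply Rmult_lt_0_compat; [apply lt_0_INR; lia|apply PI_RGT_0]).
  pose proof (xn_lt_1_lam_pos g n lam hN hx) as hlam_pos.
  assert (hx0 : 0 < xn g n lam) by apply Rpower_gt0.
  exists (dWn g n lam). split; [|split; [|split]].
  - intros x hxpos. now apply derivable_pt_lim_Wn.
  - intros x [hx0x hx1]. eexists. split.
    + apply derivable_pt_lim_dWn; lra.
    + apply Rle_ge, Wn_supersolution; lra.
  - apply Rle_ge, Rlt_le, Wn_1_pos; assumption.
  - rewrite dWn_xn by assumption.
    pose proof (sqrt_lt_R0 _ hx0). nra.
Qed.
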